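(* Let $H$ be $d^4/dx^4$ in $L_2(\mathbb{R}_+)$ with boundary conditions $u''(0)=\alpha u(0)+\alpha_1u'(0)$, $u'''(0)=-\alpha_2u(0)-\bar\alpha u'(0)$ ($\alpha\in\mathbb{C}$, $\alpha_1,\alpha_2\in\mathbb{R}$). A point $\lambda=k^4$, $k>0$, is an eigenvalue of $H$ if and only if $\alpha=\bar\alpha$, $\alpha_1=(\alpha-k^2)k^{-1}$ and $\alpha_2=(\alpha+k^2)k$. In this case $\Omega'(k)=-2k(\alpha-ik^2)\neq0$, so $k$ is a simple zero of $\Omega$.
   Context: $\alpha_0=\alpha_1\alpha_2-|\alpha|^2$, $\Omega(\zeta)=\alpha_0+(1-i)\alpha_2\zeta+2i\operatorname{Re}\alpha\,\zeta^2-(1+i)\alpha_1\zeta^3-\zeta^4$. $H$ acts as $u\mapsto u^{(4)}$ on $u\in\mathsf{H}^4(\mathbb{R}_+)$ satisfying the boundary conditions; it is self-adjoint. *)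

From Stdlib Require Import Reals.
From Coquelicot Require Import Coquelicot.

Open Scope R_scope.

Definition L2_plus (f : R -> C) : Prop :=
  ex_RInt_gen (fun x => (Cmod (f x)) ^ 2) (at_right 0) (Rbar_locally p_infty).

(* u belongs to H^4(R_+), with u1,u2,u3,u4 its successive derivatives:
   the derivatives exist on (0,+oo), u, u', u'', u''' extend continuously
   to x = 0 (their boundary values being u(0), u1(0), u2(0), u3(0)),
   and u, ..., u'''' are all in L_2(R_+). *)
Definition H4_plus (u u1 u2 u3 u4 : R -> C) : Prop :=
  (forall x, 0 < x ->
     is_derive u x (u1 x) /\ is_derive u1 x (u2 x) /\
     is_derive u2 x (u3 x) /\ is_derive u3 x (u4 x)) /\
  filterlim u (at_right 0) (locally (u 0)) /\
  filterlim u1 (at_right 0) (locally (u1 0)) /\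
  filterlim u2 (at_right 0) (locally (u2 0)) /\
  filterlim u3 (at_right 0) (locally (u3 0)) /\
  L2_plus u /\ L2_plus u1 /\ L2_plus u2 /\ L2_plus u3 /\ L2_plus u4.

Definition bc_H (alpha : C) (alpha1 alpha2 : R) (u u1 u2 u3 : R -> C) : Prop :=
  u2 0 = (alpha * u 0 + RtoC alpha1 * u1 0)%C /\
  u3 0 = (- (RtoC alpha2 * u 0) - Cconj alpha * u1 0)%C.

Definition eigenvalue_H (alpha : C) (alpha1 alpha2 : R) (lambda : R) : Prop :=
  exists u u1 u2 u3 u4 : R -> C,
    H4_plus u u1 u2 u3 u4 /\
    bc_H alpha alpha1 alpha2 u u1 u2 u3 /\
    (forall x, 0 < x -> u4 x = (RtoC lambda * u x)%C) /\
    (exists x, 0 < x /\ u x <> RtoC 0).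

Definition alpha0 (alpha : C) (alpha1 alpha2 : R) : R :=
  alpha1 * alpha2 - (Cmod alpha) ^ 2.

Definition Omega (alpha : C) (alpha1 alpha2 : R) (z : C) : C :=
  (RtoC (alpha0 alpha alpha1 alpha2)
   + (RtoC 1 - Ci) * RtoC alpha2 * z
   + RtoC 2 * Ci * RtoC (Re alpha) * (z * z)
   - (RtoC 1 + Ci) * RtoC alpha1 * (z * z * z)
   - z * z * z * z)%C.

From Stdlib Require Import Reals Lra.
From Coquelicot Require Import Coquelicot.

Open Scope R_scope.

(* Each of Re u, Im u is a real solution p of p'''' = k^4 p on (0, +oo) with
   p, ..., p''' square integrable.  Then h = p''' + k p'' + k^2 p' + k^3 p
   satisfies h' = k h, so h^2 is nondecreasing and integrable, hence h = 0;
   next g = p' + k p satisfies g'' = - k^2 g, so its energy g'^2 + k^2 g^2 is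
   constant and integrable, hence g = 0.  Thus u^(j) = (-k)^j u, and the
   boundary conditions become k^2 u(0) = (alpha - k alpha1) u(0) and
   - k^3 u(0) = (k conj(alpha) - alpha2) u(0) with u(0) <> 0, which force alpha
   to be real and determine alpha1, alpha2; conversely e^{-kx} is then an
   eigenfunction. *)

(* Integrability on [1, +oo) is all that square integrability is used for; the
   ray starts at 1 so that no regularity at 0 is needed. *)
Definition RInt_ray_bounded (f : R -> R) : Prop :=
  exists M, forall b, 1 <= b -> ex_RInt f 1 b /\ RInt f 1 b <= M.

Lemma ex_RInt_gen_RInt_ray_bounded (f : R -> R) :
  (forall x, 0 <= f x) ->
  ex_RInt_gen f (at_right 0) (Rbar_locally p_infty) -> RInt_ray_bounded f.
Proof.
  intros f_ge0 [l Hl].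
  destruct (Hl _ (locally_ball l (mkposreal 1 Rlt_0_1))) as [Q P [eps HQ] [M HP] Hall].
  set (a := Rmin (eps / 2) (1 / 2)).
  assert (a_pos : 0 < a) by (apply Rmin_glb_lt; generalize (cond_pos eps); lra).
  assert (a_lt1 : a < 1) by (unfold a; generalize (Rmin_r (eps / 2) (1 / 2)); lra).
  assert (Qa : Q a).
  { apply HQ; [|exact a_pos].
    unfold ball; simpl; unfold AbsRing_ball, abs, minus, plus, opp; simpl.
    rewrite Rabs_right by lra. generalize (Rmin_l (eps / 2) (1 / 2)) (cond_pos eps). fold a. lra. }
  exists (l + 1). intros b b_ge1.
  set (b' := Rmax b (Rmax M 1 + 1)).
  assert (b_le : b <= b') by apply Rmax_l.
  assert (Pb' : P b').
  { apply HP. unfold b'. generalize (Rmax_r b (Rmax M 1 + 1)) (Rmax_l M 1). lra. }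
  destruct (Hall a b' Qa Pb') as [y [Hy y_near]].
  assert (y_lt : y < l + 1).
  { unfold ball in y_near; simpl in y_near.
    unfold AbsRing_ball, abs, minus, plus, opp in y_near; simpl in y_near.
    apply Rabs_def2 in y_near. lra. }
  assert (I_ab' : ex_RInt f a b') by (exists y; exact Hy).
  assert (I_1b' : ex_RInt f 1 b') by (apply (ex_RInt_Chasles_2 f a); [lra|exact I_ab']).
  assert (I_a1 : ex_RInt f a 1) by (apply (ex_RInt_Chasles_1 f a 1 b'); [lra|exact I_ab']).
  assert (I_1b : ex_RInt f 1 b) by (apply (ex_RInt_Chasles_1 f 1 b b'); [lra|exact I_1b']).
  assert (I_bb' : ex_RInt f b b') by (apply (ex_RInt_Chasles_2 f 1 b b'); [lra|exact I_1b']).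
  split; [exact I_1b|].
  pose proof (RInt_Chasles f a 1 b' I_a1 I_1b') as split1.
  pose proof (RInt_Chasles f 1 b b' I_1b I_bb') as split2.
  rewrite (is_RInt_unique f a b' y Hy) in split1.
  change (RInt f a 1 + RInt f 1 b' = y) in split1.
  change (RInt f 1 b + RInt f b b' = RInt f 1 b') in split2.
  assert (0 <= RInt f a 1) by (apply RInt_ge_0; auto; lra).
  assert (0 <= RInt f b b') by (apply RInt_ge_0; auto; lra).
  lra.
Qed.

Lemma RInt_ray_bounded_plus (f g : R -> R) :
  RInt_ray_bounded f -> RInt_ray_bounded g -> RInt_ray_bounded (fun x => f x + g x).
Proof.
  intros [Mf Hf] [Mg Hg]. exists (Mf + Mg). intros b b_ge1.
  destruct (Hf b b_ge1) as [If Bf]. destruct (Hg b b_ge1) as [Ig Bg].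
  split.
  - apply (ex_RInt_plus (V := R_NormedModule)); assumption.
  - pose proof (RInt_plus (V := R_CompleteNormedModule) f g 1 b If Ig) as sum.
    change (RInt (fun x => f x + g x) 1 b = RInt f 1 b + RInt g 1 b) in sum.
    rewrite sum. lra.
Qed.

Lemma RInt_ray_bounded_scal (f : R -> R) (c : R) :
  0 <= c -> RInt_ray_bounded f -> RInt_ray_bounded (fun x => c * f x).
Proof.
  intros c_ge0 [M Hf]. exists (c * M). intros b b_ge1.
  destruct (Hf b b_ge1) as [If Bf].
  split.
  - apply (ex_RInt_scal (V := R_NormedModule)); exact If.
  - pose proof (RInt_scal (V := R_CompleteNormedModule) f 1 b c If) as scal.
    change (RInt (fun x => c * f x) 1 b = c * RInt f 1 b) in scal.
    rewrite scal. apply Rmult_le_compat_l; assumption.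
Qed.

Lemma RInt_ray_bounded_le (f g : R -> R) :
  (forall x, 0 < x -> ex_derive f x) -> (forall x, 0 < x -> f x <= g x) ->
  RInt_ray_bounded g -> RInt_ray_bounded f.
Proof.
  intros f_der f_le [M Hg]. exists M. intros b b_ge1.
  destruct (Hg b b_ge1) as [Ig Bg].
  assert (If : ex_RInt f 1 b).
  { apply (ex_RInt_continuous (V := R_CompleteNormedModule)). intros x Hx.
    apply (ex_derive_continuous (V := R_NormedModule)), f_der.
    rewrite Rmin_left in Hx by lra. lra. }
  split; [exact If|].
  apply Rle_trans with (RInt g 1 b); [|exact Bg].
  apply RInt_le; auto. intros x Hx. apply f_le. lra.
Qed.

Lemma RInt_ray_bounded_sq_plus_scal (f g : R -> R) (c : R) :
  (forall x, 0 < x -> ex_derive f x) -> (forall x, 0 < x -> ex_derive g x) ->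
  RInt_ray_bounded (fun x => f x ^ 2) -> RInt_ray_bounded (fun x => g x ^ 2) ->
  RInt_ray_bounded (fun x => (f x + c * g x) ^ 2).
Proof.
  intros f_der g_der Bf Bg.
  apply (RInt_ray_bounded_le _ (fun x => 2 * f x ^ 2 + 2 * c ^ 2 * g x ^ 2)).
  - intros x Hx. auto_derive. auto.
  - intros x _. assert (0 <= (f x - c * g x) ^ 2) by apply pow2_ge_0. nra.
  - apply RInt_ray_bounded_plus; apply RInt_ray_bounded_scal; auto.
    + lra.
    + assert (0 <= c ^ 2) by apply pow2_ge_0. lra.
Qed.

Lemma nondecreasing_of_derive_nonneg (F F' : R -> R) :
  (forall x, 0 < x -> is_derive F x (F' x)) -> (forall x, 0 < x -> 0 <= F' x) ->
  forall x y, 0 < x -> x <= y -> F x <= F y.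
Proof.
  intros F_der F'_ge0 x y x_pos x_le_y.
  destruct (Req_dec x y) as [<-|x_ne_y]; [lra|].
  destruct (MVT_cor2 F F' x y) as [c [Fxy c_in]]; [lra| |].
  - intros c c_in. apply is_derive_Reals, F_der. lra.
  - assert (0 <= F' c) by (apply F'_ge0; lra). nra.
Qed.

(* F x0 > 0 would make the integral over [max x0 1, b] grow linearly in b. *)
Lemma RInt_ray_bounded_nondecreasing_eq0 (F : R -> R) :
  (forall x y, 0 < x -> x <= y -> F x <= F y) -> (forall x, 0 < x -> 0 <= F x) ->
  RInt_ray_bounded F -> forall x, 0 < x -> F x = 0.
Proof.
  intros F_mono F_ge0 [M HF] x0 x0_pos.
  destruct (Req_dec (F x0) 0) as [|F_ne0]; [assumption|exfalso].
  assert (F_pos : 0 < F x0) by (generalize (F_ge0 x0 x0_pos); lra).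
  set (c := Rmax x0 1).
  assert (c_ge1 : 1 <= c) by apply Rmax_r.
  assert (c_ge : x0 <= c) by apply Rmax_l.
  set (b := c + (Rabs M + 1) / F x0).
  assert (b_ge : c <= b).
  { unfold b. assert (0 < (Rabs M + 1) / F x0); [|lra].
    apply Rdiv_lt_0_compat; [generalize (Rabs_pos M)|]; lra. }
  destruct (HF b ltac:(lra)) as [I_1b B_1b].
  assert (I_1c : ex_RInt F 1 c) by (apply (ex_RInt_Chasles_1 F 1 c b); [lra|exact I_1b]).
  assert (I_cb : ex_RInt F c b) by (apply (ex_RInt_Chasles_2 F 1 c b); [lra|exact I_1b]).
  pose proof (RInt_Chasles F 1 c b I_1c I_cb) as split.
  unfold plus in split; simpl in split.
  assert (0 <= RInt F 1 c) by (apply RInt_ge_0; auto; intros; apply F_ge0; lra).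
  assert (lower : RInt (fun _ => F x0) c b <= RInt F c b).
  { apply RInt_le; auto; [apply ex_RInt_const|]. intros x Hx. apply F_mono; lra. }
  rewrite RInt_const in lower. unfold scal in lower; simpl in lower.
  unfold mult in lower; simpl in lower.
  assert ((b - c) * F x0 = Rabs M + 1) by (unfold b; field; lra).
  generalize (Rle_abs M). lra.
Qed.

Lemma growing_mode_eq0 (h : R -> R) (k : R) :
  0 < k -> (forall x, 0 < x -> is_derive h x (k * h x)) ->
  RInt_ray_bounded (fun x => h x ^ 2) -> forall x, 0 < x -> h x = 0.
Proof.
  intros k_pos h_der h_bnd x x_pos.
  assert (sq_der : forall t, 0 < t -> is_derive (fun t => h t ^ 2) t (2 * k * h t ^ 2)).
  { intros t t_pos. replace (2 * k * h t ^ 2) with (INR 2 * (k * h t) * h t ^ (2 - 1))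
      by (simpl; ring).
    apply is_derive_pow, h_der, t_pos. }
  assert (h x ^ 2 = 0); [|nra].
  apply (RInt_ray_bounded_nondecreasing_eq0 (fun t => h t ^ 2)); auto.
  - apply (nondecreasing_of_derive_nonneg _ (fun t => 2 * k * h t ^ 2)); auto.
    intros t _. assert (0 <= h t ^ 2) by apply pow2_ge_0. nra.
  - intros; apply pow2_ge_0.
Qed.

Lemma harmonic_mode_eq0 (g g1 : R -> R) (k : R) :
  0 < k -> (forall x, 0 < x -> is_derive g x (g1 x)) ->
  (forall x, 0 < x -> is_derive g1 x (- k ^ 2 * g x)) ->
  RInt_ray_bounded (fun x => g x ^ 2) -> RInt_ray_bounded (fun x => g1 x ^ 2) ->
  forall x, 0 < x -> g x = 0 /\ g1 x = 0.
Proof.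
  intros k_pos g_der g1_der g_bnd g1_bnd x x_pos.
  set (E := fun t => g1 t ^ 2 + k ^ 2 * g t ^ 2).
  assert (E_der : forall t, 0 < t -> is_derive E t 0).
  { intros t t_pos. unfold E. auto_derive.
    - split; [eexists; apply g1_der, t_pos|]. split; [eexists; apply g_der, t_pos|easy].
      rewrite (is_derive_unique (fun y : R => g y) _ _ (g_der t t_pos)).
      rewrite (is_derive_unique (fun y : R => g1 y) _ _ (g1_der t t_pos)). ring. }
  assert (E_x : E x = 0).
  { apply (RInt_ray_bounded_nondecreasing_eq0 E); auto.
    - apply (nondecreasing_of_derive_nonneg E (fun _ => 0)); auto. intros; lra.
    - intros t _. unfold E. assert (0 <= g t ^ 2) by apply pow2_ge_0.
      assert (0 <= g1 t ^ 2) by apply pow2_ge_0. nra.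
    - apply RInt_ray_bounded_plus; [exact g1_bnd|].
      apply RInt_ray_bounded_scal; [apply pow2_ge_0|exact g_bnd]. }
  unfold E in E_x. assert (0 < k ^ 2) by (apply pow_lt; lra).
  assert (0 <= g x ^ 2) by apply pow2_ge_0. assert (0 <= g1 x ^ 2) by apply pow2_ge_0.
  assert (0 <= k ^ 2 * g x ^ 2) by (apply Rmult_le_pos; lra).
  split; apply Rsqr_0_uniq; unfold Rsqr; simpl in *; nra.
Qed.

Section FourthOrderEquation.

Variables (p p1 p2 p3 p4 : R -> R) (k : R).
Hypothesis k_pos : 0 < k.
Hypothesis p_derive : forall x, 0 < x ->
  is_derive p x (p1 x) /\ is_derive p1 x (p2 x) /\
  is_derive p2 x (p3 x) /\ is_derive p3 x (p4 x).
Hypothesis p4_eq : forall x, 0 < x -> p4 x = k ^ 4 * p x.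
Hypothesis p_bnd : RInt_ray_bounded (fun x => p x ^ 2).
Hypothesis p1_bnd : RInt_ray_bounded (fun x => p1 x ^ 2).
Hypothesis p2_bnd : RInt_ray_bounded (fun x => p2 x ^ 2).
Hypothesis p3_bnd : RInt_ray_bounded (fun x => p3 x ^ 2).

Let p_ex_derive (x : R) (x_pos : 0 < x) :
  ex_derive p x /\ ex_derive p1 x /\ ex_derive p2 x /\ ex_derive p3 x.
Proof.
  destruct (p_derive x x_pos) as [D0 [D1 [D2 D3]]].
  repeat split; eexists; eassumption.
Qed.

Lemma growing_part_eq0 (x : R) : 0 < x -> p3 x + k * p2 x + k ^ 2 * p1 x + k ^ 3 * p x = 0.
Proof.
  apply (growing_mode_eq0 (fun t => p3 t + k * p2 t + k ^ 2 * p1 t + k ^ 3 * p t) k k_pos).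
  - intros t t_pos. destruct (p_derive t t_pos) as [D0 [D1 [D2 D3]]].
    auto_derive.
    + destruct (p_ex_derive t t_pos) as [E0 [E1 [E2 E3]]]. tauto.
    + rewrite (is_derive_unique (fun y : R => p y) _ _ D0),
        (is_derive_unique (fun y : R => p1 y) _ _ D1),
        (is_derive_unique (fun y : R => p2 y) _ _ D2),
        (is_derive_unique (fun y : R => p3 y) _ _ D3), (p4_eq t t_pos). ring.
  - apply RInt_ray_bounded_sq_plus_scal; [| | |exact p_bnd].
    3: apply RInt_ray_bounded_sq_plus_scal; [| | |exact p1_bnd].
    5: apply RInt_ray_bounded_sq_plus_scal; [| |exact p3_bnd|exact p2_bnd].
    all: intros t t_pos; destruct (p_ex_derive t t_pos) as (E0 & E1 & E2 & E3).
    all: try assumption.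
    all: auto_derive; tauto.
Qed.

Lemma fourth_order_decaying (x : R) : 0 < x ->
  p1 x = - k * p x /\ p2 x = k ^ 2 * p x /\ p3 x = - k ^ 3 * p x.
Proof.
  intros x_pos.
  destruct (harmonic_mode_eq0 (fun t => p1 t + k * p t) (fun t => p2 t + k * p1 t) k k_pos)
    with (x := x) as [g_eq0 g1_eq0]; auto.
  - intros t t_pos. destruct (p_derive t t_pos) as [D0 [D1 _]].
    apply (is_derive_plus (K := R_AbsRing) (V := R_NormedModule)); auto.
    apply is_derive_scal; exact D0.
  - intros t t_pos. destruct (p_derive t t_pos) as [_ [D1 [D2 _]]].
    replace (- k ^ 2 * (p1 t + k * p t)) with (p3 t + k * p2 t)
      by (generalize (growing_part_eq0 t t_pos); lra).
    apply (is_derive_plus (K := R_AbsRing) (V := R_NormedModule)); auto.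
    apply is_derive_scal; exact D1.
  - apply RInt_ray_bounded_sq_plus_scal; auto;
      intros t t_pos; destruct (p_ex_derive t t_pos) as (E0 & E1 & E2 & E3); assumption.
  - apply RInt_ray_bounded_sq_plus_scal; auto;
      intros t t_pos; destruct (p_ex_derive t t_pos) as (E0 & E1 & E2 & E3); assumption.
  - assert (p1_eq : p1 x = - k * p x) by lra.
    assert (p2_eq : p2 x = k ^ 2 * p x).
    { replace (p2 x) with (- k * p1 x) by lra. rewrite p1_eq. ring. }
    split; [exact p1_eq|]. split; [exact p2_eq|].
    pose proof (growing_part_eq0 x x_pos) as h_eq0. rewrite p1_eq, p2_eq in h_eq0. lra.
Qed.

End FourthOrderEquation.

Lemma at_right_limit_scal (f g : R -> R) (a b c : R) :
  filterlim f (at_right 0) (locally a) -> filterlim g (at_right 0) (locally b) ->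
  (forall x, 0 < x -> f x = c * g x) -> a = c * b.
Proof.
  intros f_lim g_lim f_eq.
  assert (cg_lim : filterlim (fun x => c * g x) (at_right 0) (locally (c * b))).
  { apply (filterlim_comp _ _ _ g (fun y => c * y) _ (locally b)); [exact g_lim|].
    apply (continuous_mult (fun _ => c) (fun y => y));
      [apply continuous_const|apply continuous_id]. }
  assert (cf_lim : filterlim (fun x => c * g x) (at_right 0) (locally a)).
  { apply (filterlim_ext_loc f); [|exact f_lim].
    exists (mkposreal 1 Rlt_0_1). intros y _ y_pos. apply f_eq, y_pos. }
  pose proof (Proper_StrongProper _ (at_right_proper_filter 0)).
  exact (filterlim_locally_unique (K := R_AbsRing) (V := R_NormedModule) (F := at_right 0)
    (fun x => c * g x) a (c * b) cf_lim cg_lim).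
Qed.

Lemma derive_nonpos_limit0_nonpos (F F' : R -> R) (x : R) :
  (forall y, 0 < y -> is_derive F y (F' y)) -> (forall y, 0 < y -> F' y <= 0) ->
  filterlim F (at_right 0) (locally 0) -> 0 < x -> F x <= 0.
Proof.
  intros F_der F'_le0 F_lim x_pos.
  apply (filterlim_le (F := at_right 0) (fun _ => F x) F (F x) 0);
    [|apply filterlim_const|exact F_lim].
  exists (mkposreal x x_pos). intros y y_ball y_pos.
  unfold ball in y_ball; simpl in y_ball.
  unfold AbsRing_ball, abs, minus, plus, opp in y_ball; simpl in y_ball.
  apply Rabs_def2 in y_ball.
  assert (- F y <= - F x); [|lra].
  apply (nondecreasing_of_derive_nonneg (fun t => - F t) (fun t => - F' t)); try lra.
  - intros t t_pos. apply (is_derive_opp (K := R_AbsRing) (V := R_NormedModule)), F_der, t_pos.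
  - intros t t_pos. generalize (F'_le0 t t_pos). lra.
Qed.

Lemma is_derive_linear_comp {U V : NormedModule R_AbsRing} (l : U -> V) (f : R -> U)
  (x : R) (d : U) : is_linear l -> is_derive f x d -> is_derive (fun t => l (f t)) x (l d).
Proof.
  intros l_lin f_der. unfold is_derive in *.
  eapply filterdiff_ext_lin.
  - apply (filterdiff_comp' f l x); [exact f_der|]. apply filterdiff_linear, l_lin.
  - intros y. simpl. apply (linear_scal l l_lin).
Qed.

Lemma filterlim_linear_comp {U V : NormedModule R_AbsRing} (l : U -> V) (f : R -> U)
  (F : (R -> Prop) -> Prop) (z : U) :
  is_linear l -> filterlim f F (locally z) -> filterlim (fun t => l (f t)) F (locally (l z)).
Proof.
  intros l_lin f_lim. apply (filterlim_comp _ _ _ f l _ (locally z)); [exact f_lim|].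
  apply linear_cont, l_lin.
Qed.

Section LinearComponent.

Variable pr : C -> R.
Hypothesis pr_linear : is_linear (U := C_R_NormedModule) (V := R_NormedModule) pr.
Hypothesis pr_sq_le : forall z, pr z ^ 2 <= Cmod z ^ 2.

Variables (u u1 u2 u3 u4 : R -> C) (k : R).
Hypothesis k_pos : 0 < k.
Hypothesis u_H4 : H4_plus u u1 u2 u3 u4.
Hypothesis u_eigen : forall x, 0 < x -> u4 x = (RtoC (k ^ 4) * u x)%C.

Let u_derive := proj1 u_H4.

Lemma linear_comp_ray_bounded (v v' : R -> C) :
  (forall x, 0 < x -> is_derive v x (v' x)) -> L2_plus v ->
  RInt_ray_bounded (fun x => pr (v x) ^ 2).
Proof.
  intros v_der v_L2.
  apply (RInt_ray_bounded_le _ (fun x => Cmod (v x) ^ 2)).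
  - intros x x_pos. eexists. apply (is_derive_pow (fun t => pr (v t))).
    apply (is_derive_linear_comp pr v x (v' x) pr_linear), v_der, x_pos.
  - intros x _. apply pr_sq_le.
  - apply ex_RInt_gen_RInt_ray_bounded; [intros; apply pow2_ge_0|exact v_L2].
Qed.

Lemma component_decaying (x : R) : 0 < x ->
  pr (u1 x) = - k * pr (u x) /\ pr (u2 x) = k ^ 2 * pr (u x) /\
  pr (u3 x) = - k ^ 3 * pr (u x).
Proof.
  pose proof u_H4 as (_ & _ & _ & _ & _ & L0 & L1 & L2 & L3 & _).
  apply (fourth_order_decaying (fun t => pr (u t)) (fun t => pr (u1 t)) (fun t => pr (u2 t))
    (fun t => pr (u3 t)) (fun t => pr (u4 t)) k k_pos).
  - intros t t_pos. destruct (u_derive t t_pos) as (D0 & D1 & D2 & D3).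
    split; [exact (is_derive_linear_comp pr _ _ _ pr_linear D0)|].
    split; [exact (is_derive_linear_comp pr _ _ _ pr_linear D1)|].
    split; [exact (is_derive_linear_comp pr _ _ _ pr_linear D2)|].
    exact (is_derive_linear_comp pr _ _ _ pr_linear D3).
  - intros t t_pos. rewrite (u_eigen t t_pos), <- scal_R_Cmult.
    apply (linear_scal (U := C_R_NormedModule) (V := R_NormedModule) pr pr_linear).
  - apply (linear_comp_ray_bounded u u1); [intros t t_pos; apply (u_derive t t_pos)|exact L0].
  - apply (linear_comp_ray_bounded u1 u2); [intros t t_pos; apply (u_derive t t_pos)|exact L1].
  - apply (linear_comp_ray_bounded u2 u3); [intros t t_pos; apply (u_derive t t_pos)|exact L2].
  - apply (linear_comp_ray_bounded u3 u4); [intros t t_pos; apply (u_derive t t_pos)|exact L3].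
Qed.

Lemma component_boundary :
  pr (u1 0) = - k * pr (u 0) /\ pr (u2 0) = k ^ 2 * pr (u 0) /\
  pr (u3 0) = - k ^ 3 * pr (u 0).
Proof.
  pose proof u_H4 as (_ & L0 & L1 & L2 & L3 & _).
  pose proof (filterlim_linear_comp pr u _ _ pr_linear L0) as lim0.
  split; [|split].
  - apply (at_right_limit_scal _ _ _ _ _ (filterlim_linear_comp pr u1 _ _ pr_linear L1) lim0).
    intros x x_pos. apply (component_decaying x x_pos).
  - apply (at_right_limit_scal _ _ _ _ _ (filterlim_linear_comp pr u2 _ _ pr_linear L2) lim0).
    intros x x_pos. apply (component_decaying x x_pos).
  - apply (at_right_limit_scal _ _ _ _ _ (filterlim_linear_comp pr u3 _ _ pr_linear L3) lim0).
    intros x x_pos. apply (component_decaying x x_pos).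
Qed.

(* The square of the component is nonincreasing and tends to its value at 0. *)
Lemma component_eq0 : pr (u 0) = 0 -> forall x, 0 < x -> pr (u x) = 0.
Proof.
  intros u0_eq0 x x_pos.
  assert (pr (u x) ^ 2 <= 0); [|nra].
  apply (derive_nonpos_limit0_nonpos (fun t => pr (u t) ^ 2) (fun t => - 2 * k * pr (u t) ^ 2));
    [| | |exact x_pos].
  - intros t t_pos.
    replace (- 2 * k * pr (u t) ^ 2) with (INR 2 * pr (u1 t) * pr (u t) ^ (2 - 1))
      by (rewrite (proj1 (component_decaying t t_pos)); simpl; ring).
    apply is_derive_pow, (is_derive_linear_comp pr u t (u1 t) pr_linear), (u_derive t t_pos).
  - intros t _. assert (0 <= pr (u t) ^ 2) by apply pow2_ge_0. nra.
  - pose proof u_H4 as (_ & L0 & _).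
    pose proof (filterlim_linear_comp pr u _ _ pr_linear L0) as lim0. rewrite u0_eq0 in lim0.
    replace 0 with (0 ^ 2) at 2 by ring.
    apply (filterlim_comp _ _ _ (fun t => pr (u t)) (fun y => y ^ 2) _ (locally 0)); [exact lim0|].
    apply (ex_derive_continuous (V := R_NormedModule)). auto_derive. easy.
Qed.

End LinearComponent.

Lemma is_linear_Re : is_linear (U := C_R_NormedModule) (V := R_NormedModule) Re.
Proof. apply is_linear_fst. Qed.

Lemma is_linear_Im : is_linear (U := C_R_NormedModule) (V := R_NormedModule) Im.
Proof. apply is_linear_snd. Qed.

Lemma Re_sq_le_Cmod (z : C) : Re z ^ 2 <= Cmod z ^ 2.
Proof. rewrite Cmod2_alt. generalize (pow2_ge_0 (Im z)). lra. Qed.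

Lemma Im_sq_le_Cmod (z : C) : Im z ^ 2 <= Cmod z ^ 2.
Proof. rewrite Cmod2_alt. generalize (pow2_ge_0 (Re z)). lra. Qed.

Lemma eigenfunction_boundary_values (u u1 u2 u3 u4 : R -> C) (k : R) :
  0 < k -> H4_plus u u1 u2 u3 u4 ->
  (forall x, 0 < x -> u4 x = (RtoC (k ^ 4) * u x)%C) ->
  (exists x, 0 < x /\ u x <> RtoC 0) ->
  u 0 <> RtoC 0 /\ u1 0 = (- RtoC k * u 0)%C /\
  u2 0 = (RtoC k ^ 2 * u 0)%C /\ u3 0 = (- RtoC k ^ 3 * u 0)%C.
Proof.
  intros k_pos u_H4 u_eigen [x0 [x0_pos ux0_ne0]].
  destruct (component_boundary Re is_linear_Re Re_sq_le_Cmod u u1 u2 u3 u4 k k_pos u_H4 u_eigen)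
    as (re1 & re2 & re3).
  destruct (component_boundary Im is_linear_Im Im_sq_le_Cmod u u1 u2 u3 u4 k k_pos u_H4 u_eigen)
    as (im1 & im2 & im3).
  unfold Re, Im in *.
  split; [|split; [|split]]; try (apply injective_projections; simpl; lra).
  intros u0_eq0. apply ux0_ne0. apply injective_projections; simpl.
  - apply (component_eq0 Re is_linear_Re Re_sq_le_Cmod u u1 u2 u3 u4 k k_pos u_H4 u_eigen);
      [rewrite u0_eq0; reflexivity|exact x0_pos].
  - apply (component_eq0 Im is_linear_Im Im_sq_le_Cmod u u1 u2 u3 u4 k k_pos u_H4 u_eigen);
      [rewrite u0_eq0; reflexivity|exact x0_pos].
Qed.

Lemma Cmult_eq_reg_r (z a b : C) : z <> RtoC 0 -> (a * z = b * z)%C -> a = b.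
Proof.
  intros z_ne0 ab_eq.
  replace a with (a * z / z)%C by (field; exact z_ne0).
  rewrite ab_eq. field. exact z_ne0.
Qed.

Lemma Cconj_RtoC (a : R) : Cconj (RtoC a) = RtoC a.
Proof. apply injective_projections; simpl; ring. Qed.

Lemma eigenvalue_H_real_coefficients (alpha : C) (alpha1 alpha2 k : R) :
  0 < k -> eigenvalue_H alpha alpha1 alpha2 (k ^ 4) ->
  exists a, alpha = RtoC a /\ alpha1 = (a - k ^ 2) / k /\ alpha2 = (a + k ^ 2) * k.
Proof.
  intros k_pos (u & u1 & u2 & u3 & u4 & u_H4 & [bc2 bc3] & u_eigen & u_ne0).
  destruct (eigenfunction_boundary_values u u1 u2 u3 u4 k k_pos u_H4 u_eigen u_ne0)
    as (u0_ne0 & u1_eq & u2_eq & u3_eq).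
  rewrite u1_eq, u2_eq in bc2. rewrite u1_eq, u3_eq in bc3.
  set (a := k ^ 2 + alpha1 * k).
  assert (alpha_eq : alpha = RtoC a).
  { apply (Cmult_eq_reg_r (u 0)); [exact u0_ne0|].
    unfold a. rewrite RtoC_plus, RtoC_mult, RtoC_pow, Cmult_plus_distr_r, bc2. ring. }
  rewrite alpha_eq, Cconj_RtoC in bc3.
  assert (alpha2_eq : RtoC alpha2 = RtoC (k ^ 3 + a * k)).
  { apply (Cmult_eq_reg_r (u 0)); [exact u0_ne0|].
    replace (RtoC alpha2 * u 0)%C
      with (- (- (RtoC alpha2 * u 0) - RtoC a * (- RtoC k * u 0)) + RtoC a * RtoC k * u 0)%C
      by ring.
    rewrite <- bc3, RtoC_plus, RtoC_mult, RtoC_pow. ring. }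
  apply RtoC_inj in alpha2_eq.
  exists a. split; [exact alpha_eq|]. split.
  - unfold a. field. lra.
  - rewrite alpha2_eq. ring.
Qed.

Lemma is_linear_RtoC : is_linear (U := R_NormedModule) (V := C_R_NormedModule) RtoC.
Proof.
  split.
  - intros x y. apply injective_projections; simpl; unfold plus; simpl; ring.
  - intros c x. apply injective_projections; simpl; unfold scal; simpl; unfold mult; simpl; ring.
  - exists 1. split; [lra|]. intros x. rewrite Rmult_1_l. unfold norm; simpl.
    unfold prod_norm; simpl.
    change (norm (0 : R_NormedModule)) with (norm (zero : R_NormedModule)).
    rewrite norm_zero, Rmult_0_l, Rplus_0_r, Rmult_1_r, sqrt_square by apply norm_ge_0.
    apply Rle_refl.
Qed.

Definition exp_decay (k c x : R) : C := RtoC (c * exp (- (k * x))).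

Lemma is_derive_exp_decay (k c x : R) :
  is_derive (exp_decay k c) x (exp_decay k (- k * c) x).
Proof.
  unfold exp_decay.
  apply (is_derive_linear_comp RtoC (fun t => c * exp (- (k * t)))); [exact is_linear_RtoC|].
  auto_derive; [easy|ring].
Qed.

Lemma exp_decay_continuous (k c x : R) : continuous (exp_decay k c) x.
Proof.
  apply (ex_derive_continuous (V := C_R_NormedModule)).
  eexists. apply is_derive_exp_decay.
Qed.

Lemma is_lim_exp_neg_pinfty (k : R) : 0 < k -> is_lim (fun x => exp (- (k * x))) p_infty 0.
Proof.
  intros k_pos.
  apply (is_lim_comp exp (fun x => - (k * x)) p_infty 0 m_infty); [exact is_lim_exp_m| |].
  - pose proof (is_lim_opp _ _ _ (is_lim_scal_l (fun y => y) k p_infty p_infty (is_lim_id p_infty)))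
      as lim. simpl in lim.
    destruct (Rle_dec 0 k) as [k_ge0|]; [|lra].
    destruct (Rle_lt_or_eq_dec 0 k k_ge0); [exact lim|lra].
  - exists 0. intros y _ y_eq. discriminate.
Qed.

Lemma L2_plus_exp_decay (k c : R) : 0 < k -> L2_plus (exp_decay k c).
Proof.
  intros k_pos. unfold L2_plus.
  set (G := fun x => - (c ^ 2 / (2 * k)) * exp (- ((2 * k) * x))).
  assert (G_der : forall x, is_derive G x (c ^ 2 * exp (- ((2 * k) * x)))).
  { intros x. unfold G. auto_derive; [easy|field; lra]. }
  assert (sq_eq : forall x, Cmod (exp_decay k c x) ^ 2 = c ^ 2 * exp (- ((2 * k) * x))).
  { intros x. unfold exp_decay. rewrite Cmod_R, pow2_abs.
    replace (- (2 * k * x)) with (- (k * x) + - (k * x)) by ring. rewrite exp_plus. ring. }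
  exists (0 - G 0).
  apply (is_RInt_gen_ext (Derive G)).
  - apply filter_forall. intros ab x _. rewrite sq_eq. apply is_derive_unique, G_der.
  - apply is_RInt_gen_Derive.
    + apply filter_forall. intros ab x _. eexists. apply G_der.
    + apply filter_forall. intros ab x _.
      apply (continuous_ext (fun x => c ^ 2 * exp (- ((2 * k) * x)))).
      { intros y. symmetry. apply is_derive_unique, G_der. }
      apply (ex_derive_continuous (V := R_NormedModule)). auto_derive. easy.
    + apply (filterlim_filter_le_1 (F := locally 0) G);
        [exact (filter_le_within (F := locally 0) (fun x => 0 < x))|].
      apply (ex_derive_continuous (V := R_NormedModule)). eexists. apply G_der.
    + pose proof (is_lim_scal_l _ (- (c ^ 2 / (2 * k))) _ _
        (is_lim_exp_neg_pinfty (2 * k) ltac:(lra))) as lim.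
      simpl in lim. rewrite Rmult_0_r in lim. exact lim.
Qed.

Lemma eigenvalue_H_of_real (a alpha1 alpha2 k : R) :
  0 < k -> alpha1 = (a - k ^ 2) / k -> alpha2 = (a + k ^ 2) * k ->
  eigenvalue_H (RtoC a) alpha1 alpha2 (k ^ 4).
Proof.
  intros k_pos alpha1_eq alpha2_eq.
  exists (exp_decay k 1), (exp_decay k (- k)), (exp_decay k (k ^ 2)),
    (exp_decay k (- k ^ 3)), (exp_decay k (k ^ 4)).
  assert (limit0 : forall c, filterlim (exp_decay k c) (at_right 0) (locally (exp_decay k c 0))).
  { intros c. apply (filterlim_filter_le_1 (F := locally 0));
      [exact (filter_le_within (F := locally 0) (fun x => 0 < x))|apply exp_decay_continuous]. }
  assert (derive : forall c c' x, c' = - k * c -> is_derive (exp_decay k c) x (exp_decay k c' x)).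
  { intros c c' x ->. apply is_derive_exp_decay. }
  split; [|split; [|split]].
  - split; [intros x _; split; [|split; [|split]]; apply derive; ring|].
    repeat split; try apply limit0; apply L2_plus_exp_decay, k_pos.
  - unfold bc_H, exp_decay. rewrite Rmult_0_r, Ropp_0, exp_0, Cconj_RtoC.
    split; apply injective_projections; simpl; rewrite ?alpha1_eq, ?alpha2_eq; field; lra.
  - intros x _. unfold exp_decay. apply injective_projections; simpl; ring.
  - exists 1. split; [lra|]. unfold exp_decay. intro u_eq0.
    apply (f_equal Re) in u_eq0. simpl in u_eq0.
    generalize (exp_pos (- (k * 1))). lra.
Qed.

Lemma eigenvalue_conditions_real (alpha : C) (alpha1 alpha2 k : R) : 0 < k ->
  (alpha = Cconj alpha /\
   RtoC alpha1 = ((alpha - RtoC (k ^ 2)) / RtoC k)%C /\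
   RtoC alpha2 = ((alpha + RtoC (k ^ 2)) * RtoC k)%C) <->
  exists a, alpha = RtoC a /\ alpha1 = (a - k ^ 2) / k /\ alpha2 = (a + k ^ 2) * k.
Proof.
  intros k_pos. split.
  - intros (alpha_real & alpha1_eq & alpha2_eq).
    assert (alpha_eq : alpha = RtoC (Re alpha)).
    { apply injective_projections; [reflexivity|].
      apply (f_equal Im) in alpha_real. unfold Im in *; simpl in *. lra. }
    rewrite alpha_eq, <- RtoC_minus, <- RtoC_div in alpha1_eq by lra.
    rewrite alpha_eq, <- RtoC_plus, <- RtoC_mult in alpha2_eq.
    exists (Re alpha). split; [exact alpha_eq|].
    split; apply RtoC_inj; assumption.
  - intros (a & -> & -> & ->).
    rewrite Cconj_RtoC, <- RtoC_minus, <- RtoC_div, <- RtoC_plus, <- RtoC_mult by lra.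
    repeat split.
Qed.

Lemma is_derive_Cquartic (c0 c1 c2 c3 z : C) :
  is_derive (K := C_AbsRing) (V := C_NormedModule)
    (fun w => c0 + c1 * w + c2 * (w * w) - c3 * (w * w * w) - w * w * w * w)%C z
    (c1 + 2 * c2 * z - 3 * c3 * (z * z) - 4 * (z * z * z))%C.
Proof.
  assert (mult_comm : forall a b : C_AbsRing, mult a b = mult b a) by (intros; apply Cmult_comm).
  pose (p2 := fun w : C_AbsRing => mult w w).
  pose (p3 := fun w : C_AbsRing => mult w (p2 w)).
  pose (p4 := fun w : C_AbsRing => mult w (p3 w)).
  assert (D1 : is_derive (K := C_AbsRing) (fun w : C_AbsRing => w) z one) by apply is_derive_id.
  assert (D2 : is_derive (K := C_AbsRing) p2 z (plus (mult one z) (mult z one)))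
    by (apply (is_derive_mult (K := C_AbsRing) (fun w => w) (fun w => w)); auto).
  assert (D3 : is_derive (K := C_AbsRing) p3 z
                 (plus (mult one (p2 z)) (mult z (plus (mult one z) (mult z one)))))
    by (apply (is_derive_mult (K := C_AbsRing) (fun w => w) p2); auto).
  assert (D4 : is_derive (K := C_AbsRing) p4 z
                 (plus (mult one (p3 z))
                    (mult z (plus (mult one (p2 z)) (mult z (plus (mult one z) (mult z one)))))))
    by (apply (is_derive_mult (K := C_AbsRing) (fun w => w) p3); auto).
  apply (is_derive_ext (K := C_AbsRing) (V := C_NormedModule)
    (fun w => minus (minus (plus (plus c0 (scal w c1)) (scal (p2 w) c2)) (scal (p3 w) c3))
                    (scal (p4 w) (RtoC 1)))).
  { intros t. unfold p4, p3, p2, minus, plus, scal, opp; simpl; unfold mult; simpl. ring. }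
  evar (d : C).
  replace (c1 + 2 * c2 * z - 3 * c3 * (z * z) - 4 * (z * z * z))%C with d.
  - apply (is_derive_minus (K := C_AbsRing) (V := C_NormedModule));
      [|apply (is_derive_scal_l (K := C_AbsRing) (V := C_NormedModule)), D4].
    apply (is_derive_minus (K := C_AbsRing) (V := C_NormedModule));
      [|apply (is_derive_scal_l (K := C_AbsRing) (V := C_NormedModule)), D3].
    apply (is_derive_plus (K := C_AbsRing) (V := C_NormedModule));
      [|apply (is_derive_scal_l (K := C_AbsRing) (V := C_NormedModule)), D2].
    apply (is_derive_plus (K := C_AbsRing) (V := C_NormedModule)); [apply is_derive_const|].
    apply (is_derive_scal_l (K := C_AbsRing) (V := C_NormedModule)), D1.
  - unfold d, p4, p3, p2, minus, plus, scal, opp; simpl; unfold mult, one, zero; simpl. ring.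
Qed.

Lemma Omega_real_root (a k : R) : 0 < k ->
  Omega (RtoC a) ((a - k ^ 2) / k) ((a + k ^ 2) * k) (RtoC k) = RtoC 0.
Proof.
  intros k_pos. unfold Omega, alpha0. rewrite Cmod_R, pow2_abs.
  apply injective_projections; simpl; field; lra.
Qed.

Lemma is_derive_Omega (alpha : C) (alpha1 alpha2 : R) (z : C) :
  is_derive (K := C_AbsRing) (Omega alpha alpha1 alpha2) z
    ((RtoC 1 - Ci) * RtoC alpha2 + 2 * (RtoC 2 * Ci * RtoC (Re alpha)) * z
     - 3 * ((RtoC 1 + Ci) * RtoC alpha1) * (z * z) - 4 * (z * z * z))%C.
Proof.
  exact (is_derive_Cquartic (RtoC (alpha0 alpha alpha1 alpha2)) ((RtoC 1 - Ci) * RtoC alpha2)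
    (RtoC 2 * Ci * RtoC (Re alpha)) ((RtoC 1 + Ci) * RtoC alpha1) z).
Qed.

Lemma is_derive_Omega_real_root (a k : R) : 0 < k ->
  is_derive (K := C_AbsRing) (Omega (RtoC a) ((a - k ^ 2) / k) ((a + k ^ 2) * k)) (RtoC k)
    ((- (RtoC 2 * RtoC k)) * (RtoC a - Ci * RtoC (k ^ 2)))%C.
Proof.
  intros k_pos.
  replace ((- (RtoC 2 * RtoC k)) * (RtoC a - Ci * RtoC (k ^ 2)))%C
    with ((RtoC 1 - Ci) * RtoC ((a + k ^ 2) * k) + 2 * (RtoC 2 * Ci * RtoC (Re (RtoC a))) * RtoC k
          - 3 * ((RtoC 1 + Ci) * RtoC ((a - k ^ 2) / k)) * (RtoC k * RtoC k)
          - 4 * (RtoC k * RtoC k * RtoC k))%C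
    by (apply injective_projections; simpl; field; lra).
  apply is_derive_Omega.
Qed.

Lemma Omega_derivative_real_root_neq0 (a k : R) : 0 < k ->
  ((- (RtoC 2 * RtoC k)) * (RtoC a - Ci * RtoC (k ^ 2)))%C <> RtoC 0.
Proof.
  intros k_pos Heq. apply (f_equal Im) in Heq. simpl in Heq.
  assert (0 < k * (k * k)) by (repeat apply Rmult_lt_0_compat; lra). nra.
Qed.

Theorem proposition5p7 (alpha : C) (alpha1 alpha2 k : R) (hk : 0 < k) :
  (eigenvalue_H alpha alpha1 alpha2 (k ^ 4) <->
     (alpha = Cconj alpha /\
      RtoC alpha1 = ((alpha - RtoC (k ^ 2)) / RtoC k)%C /\
      RtoC alpha2 = ((alpha + RtoC (k ^ 2)) * RtoC k)%C)) /\
  (eigenvalue_H alpha alpha1 alpha2 (k ^ 4) ->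
     Omega alpha alpha1 alpha2 (RtoC k) = RtoC 0 /\
     is_derive (K := C_AbsRing) (Omega alpha alpha1 alpha2) (RtoC k)
       ((- (RtoC 2 * RtoC k)) * (alpha - Ci * RtoC (k ^ 2)))%C /\
     ((- (RtoC 2 * RtoC k)) * (alpha - Ci * RtoC (k ^ 2)))%C <> RtoC 0).
Proof.
  assert (eigenvalue_iff : eigenvalue_H alpha alpha1 alpha2 (k ^ 4) <->
    exists a, alpha = RtoC a /\ alpha1 = (a - k ^ 2) / k /\ alpha2 = (a + k ^ 2) * k).
  { split; [apply eigenvalue_H_real_coefficients, hk|].
    intros (a & -> & alpha1_eq & alpha2_eq). apply eigenvalue_H_of_real; assumption. }
  split.
  - rewrite eigenvalue_iff, eigenvalue_conditions_real by exact hk. reflexivity.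
  - intros eigenvalue. apply eigenvalue_iff in eigenvalue as (a & -> & -> & ->).
    split; [|split].
    + apply Omega_real_root, hk.
    + apply is_derive_Omega_real_root, hk.
    + apply Omega_derivative_real_root_neq0, hk.
Qed.
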